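(* Consider a finite super-modular game with player set $\mathcal V$ and binary action sets $\{\pm1\}$. Then for every configuration $x\in\mathcal X$: (i) $f^-(f^+(x))$ and $f^+(f^-(x))$ are equilibria, and they are respectively the greatest and the least equilibria that are I-reachable from $x$; (ii) $f^-(g^+(x))$ and $f^+(g^-(x))$ are equilibria, and they are respectively the greatest and the least equilibria that are BR-reachable from $x$; (iii) if $x\in\mathcal X^*$, then $g^+(x)$ and $g^-(x)$ are equilibria, and they are respectively the greatest and the least equilibria BR-reachable from $x$. Moreover: (iv) the set of equilibria $\mathcal X^*$ is a nonempty complete lattice (for the componentwise order) and is globally I-stable; (v) $\underline x^*=f^+(g^-(-\mathbf 1))=f^+(-\mathbf 1)$ and $\overline x^*=f^-(g^+(+\mathbf 1))=f^-(+\mathbf 1)$ are respectively the least and the greatest equilibria; (vi) for any two equilibria $x,y\in\mathcal X^*$, $f^+(x\vee y)$ is the least equilibrium that is $\ge$ both $x$ and $y$, and $f^-(x\wedge y)$ is the greatest equilibrium that is $\le$ both $x$ and $y$; (vii) if $\underline x^*=\overline x^*=x^*$, then $\mathcal X^*=\{x^*\}$ is globally BR-stable.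
   Context: Game: finite player set $\mathcal V$, each player has action set $\{-1,+1\}$, configurations $x\in\mathcal X=\{-1,+1\}^{\mathcal V}$, utilities $u_i:\mathcal X\to\mathbb R$; write $u_i(x)=u_i(x_i,x_{-i})$. Best response: $\mathcal B_i(x_{-i})=\arg\max_{x_i\in\{\pm1\}}u_i(x_i,x_{-i})$. An equilibrium is $x^*$ with $x_i^*\in\mathcal B_i(x^*_{-i})$ for all $i$; $\mathcal X^*$ is the set of equilibria. The game is super-modular if for every $i$, $u_i(1,x_{-i})-u_i(-1,x_{-i})\ge u_i(1,y_{-i})-u_i(-1,y_{-i})$ whenever $x_{-i}\ge y_{-i}$ (componentwise order). $x\vee y$, $x\wedge y$ are the entrywise max and min; $\bigvee L,\bigwedge L$ those of a set. Paths: a length-$l$ admissible path from $x$ to $y$ is $(x^{(0)},\dots,x^{(l)})$ with $x^{(0)}=x$, $x^{(l)}=y$, and for each $k=1,\dots,l$ a player $i_k$ with $x^{(k)}_{-i_k}=x^{(k-1)}_{-i_k}$ and $x^{(k)}_{i_k}\ne x^{(k-1)}_{i_k}$ (length $0$ allowed). It is an I-path if $u_{i_k}(x^{(k)})>u_{i_k}(x^{(k-1)})$ for all $k$, a BR-path if $u_{i_k}(x^{(k)})\ge u_{i_k}(x^{(k-1)})$ for all $k$; monotone if $x^{(0)}\lneq x^{(1)}\lneq\cdots\lneq x^{(l)}$, anti-monotone if $x^{(0)}\gneq\cdots\gneq x^{(l)}$ (where $x\lneq y$ means $x\le y$, $x\neq y$). For $\alpha\in\{\mathrm{I},\mathrm{BR}\}$: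 $\mathcal Y\subseteq\mathcal X$ is $\alpha$-reachable from $x$ if there is an $\alpha$-path from $x$ to some $y\in\mathcal Y$; globally $\alpha$-reachable if $\alpha$-reachable from every $x$; $\alpha$-invariant if there is no $\alpha$-path from any $y\in\mathcal Y$ to any $z\notin\mathcal Y$; globally $\alpha$-stable if globally $\alpha$-reachable and $\alpha$-invariant. A configuration $y$ is I-reachable (BR-reachable) from $x$ if $\{y\}$ is. Maps: $f^+(x)=\bigvee\{y: y$ reachable from $x$ by a monotone I-path$\}$, $f^-(x)=\bigwedge\{y: y$ reachable from $x$ by an anti-monotone I-path$\}$, $g^+(x)=\bigvee\{y: y$ reachable from $x$ by a monotone BR-path$\}$, $g^-(x)=\bigwedge\{y: y$ reachable from $x$ by an anti-monotone BR-path$\}$. *)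

(* Actions {-1,+1} are encoded as bool: false = -1, true = +1,
   so the order -1 < +1 is false < true. *)
From mathcomp Require Import all_boot all_order all_algebra.
Set Implicit Arguments. Unset Strict Implicit. Unset Printing Implicit Defensive.
Import Order.TTheory GRing.Theory Num.Theory.
Local Open Scope ring_scope.

Section Game.
Variables (R : realDomainType) (V : finType).

Definition config := {ffun V -> bool}.

Definition leC (x y : config) : bool := [forall i, x i ==> y i].
Definition ltC (x y : config) : bool := leC x y && (x != y).

Definition cjoin (x y : config) : config := [ffun i => x i || y i].
Definition cmeet (x y : config) : config := [ffun i => x i && y i].
Definition bigjoin (S : pred config) : config := [ffun i => [exists y, S y && y i]].
Definition bigmeet (S : pred config) : config := [ffun i => [forall y, S y ==> y i]].

Definition cm1 : config := [ffun => false].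
Definition cp1 : config := [ffun => true].

Definition upd (x : config) (i : V) (a : bool) : config :=
  [ffun j => if j == i then a else x j].

Variable u : V -> config -> R.

Definition supermodular : Prop :=
  forall (i : V) (x y : config), (forall j, j != i -> y j ==> x j) ->
    u i (upd y i true) - u i (upd y i false) <= u i (upd x i true) - u i (upd x i false).

Definition best_resp (i : V) (x : config) : pred bool :=
  fun a => [forall b, u i (upd x i b) <= u i (upd x i a)].

Definition equilibrium (x : config) : bool := [forall i, best_resp i x (x i)].

Definition Istep (x y : config) : bool :=
  [exists i, (y == upd x i (~~ x i)) && (u i x < u i y)].
Definition BRstep (x y : config) : bool :=
  [exists i, (y == upd x i (~~ x i)) && (u i x <= u i y)].
Definition mon (e : rel config) : rel config := fun x y => e x y && ltC x y.
Definition amon (e : rel config) : rel config := fun x y => e x y && ltC y x.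

(* alpha-paths: a configuration y is reachable from x by an e-path iff
   connect e x y (reflexive-transitive closure, length 0 allowed) *)
Definition reachable_set (e : rel config) (x : config) (Y : pred config) : Prop :=
  exists2 y, Y y & connect e x y.
Definition glob_reachable (e : rel config) (Y : pred config) : Prop :=
  forall x, reachable_set e x Y.
Definition invariant (e : rel config) (Y : pred config) : Prop :=
  forall y z, Y y -> connect e y z -> Y z.
Definition glob_stable (e : rel config) (Y : pred config) : Prop :=
  glob_reachable e Y /\ invariant e Y.

Definition fplus (x : config) : config := bigjoin (connect (mon Istep) x).
Definition fminus (x : config) : config := bigmeet (connect (amon Istep) x).
Definition gplus (x : config) : config := bigjoin (connect (mon BRstep) x).
Definition gminus (x : config) : config := bigmeet (connect (amon BRstep) x).

Definition greatest (P : config -> Prop) (z : config) : Prop :=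
  P z /\ forall w, P w -> leC w z.
Definition least (P : config -> Prop) (z : config) : Prop :=
  P z /\ forall w, P w -> leC z w.

End Game.

From mathcomp Require Import all_boot all_order all_algebra.
Set Implicit Arguments. Unset Strict Implicit. Unset Printing Implicit Defensive.
Import Order.TTheory GRing.Theory Num.Theory.
Local Open Scope ring_scope.

(* Section Raising studies the dynamics "switch one player from -1 to +1
   whenever a monotone predicate P allows it": the configurations reachable
   from x are closed under joins with larger configurations, hence have a
   greatest element [raise_top P x]; it is saturated (P allows no further raise)
   and no path made of P-raises and decreasing steps can climb above a
   saturated configuration lying above its start.
   Section Game identifies, for a super-modular game, the monotone I-steps
   (BR-steps) with the raises of players whose marginal payoff is > 0 (>= 0),
   so that f^+ and g^+ are instances of [raise_top].  Equilibria are the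
   configurations where nobody gains by raising nor by lowering; as raising
   never creates an incentive to lower, f^+ sends a configuration without such
   incentive to the least equilibrium above it.
   Section Duality negates all actions: this turns u into a super-modular game
   u', reverses the order and exchanges f^-, g^- with f^+, g^+ of u'. *)

Lemma connect_ind (T : finType) (e : rel T) (Q : T -> Prop) x y :
  (forall a b, Q a -> e a b -> Q b) -> Q x -> connect e x y -> Q y.
Proof.
move=> stepQ + /connectP [p + ->]; elim: p x => //= a p IHp x Qx /andP [exa pa].
exact: IHp (stepQ _ _ Qx exa) pa.
Qed.

Lemma connect_homo (T : finType) (f : T -> T) (e e' : rel T) x y :
  (forall a b, e a b -> e' (f a) (f b)) -> connect e x y -> connect e' (f x) (f y).
Proof.
move=> hom; apply: (connect_ind (Q := fun z => connect e' (f x) (f z))) (connect0 _ _).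
by move=> a b xa /hom /connect1; apply: connect_trans.
Qed.

Section Configurations.
Variable V : finType.
Implicit Types (x y z w : config V) (S : pred (config V)).

Lemma leCP x y : reflect (forall i, x i -> y i) (leC x y).
Proof. by apply: (iffP forallP) => H i; apply/implyP; apply: H. Qed.

Lemma leC_refl x : leC x x.
Proof. exact/leCP. Qed.

Lemma leC_trans x y z : leC x y -> leC y z -> leC x z.
Proof. by move=> /leCP xy /leCP yz; apply/leCP => i /xy /yz. Qed.

Lemma leC_anti x y : leC x y -> leC y x -> x = y.
Proof. by move=> /leCP xy /leCP yx; apply/ffunP => i; apply/idP/idP => [/xy|/yx]. Qed.

Lemma cm1_le x : leC (cm1 V) x.
Proof. by apply/leCP => i; rewrite ffunE. Qed.

Lemma le_cp1 x : leC x (cp1 V).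
Proof. by apply/leCP => i; rewrite ffunE. Qed.

Lemma leC_cjoinl x y : leC x (cjoin x y).
Proof. by apply/leCP => i; rewrite ffunE => ->. Qed.

Lemma leC_cjoinr x y : leC y (cjoin x y).
Proof. by apply/leCP => i; rewrite ffunE => ->; rewrite orbT. Qed.

Lemma cjoin_idPl x y : leC x y -> cjoin y x = y.
Proof.
move=> xy; apply: leC_anti (leC_cjoinl y x).
by apply/leCP => i; rewrite ffunE => /orP [|/(leCP _ _ xy)].
Qed.

Lemma leC_cmeetl x y : leC (cmeet x y) x.
Proof. by apply/leCP => i; rewrite ffunE => /andP []. Qed.

Lemma leC_cmeetr x y : leC (cmeet x y) y.
Proof. by apply/leCP => i; rewrite ffunE => /andP []. Qed.

Lemma bigjoin_ub S y : S y -> leC y (bigjoin S).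
Proof.
by move=> Sy; apply/leCP => i yi; rewrite ffunE; apply/existsP; exists y; rewrite Sy.
Qed.

Lemma bigjoinP S i : bigjoin S i -> exists2 y, S y & y i.
Proof. by rewrite ffunE => /existsP [y /andP [Sy yi]]; exists y. Qed.

Lemma bigmeet_lb S y : S y -> leC (bigmeet S) y.
Proof. by move=> Sy; apply/leCP => i; rewrite ffunE => /forallP /(_ y); rewrite Sy. Qed.

Lemma bigmeetP S i : (forall y, S y -> y i) -> bigmeet S i.
Proof. by move=> H; rewrite ffunE; apply/forallP => y; apply/implyP => /H. Qed.

Lemma leC_card_eq x y :
  leC x y -> (#|[set i | y i]| <= #|[set i | x i]|)%N -> x = y.
Proof.
move=> xy le_card; apply: (leC_anti xy); apply/leCP => i yi.
have sub : [set i | x i] \subset [set i | y i].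
  by apply/subsetP => j; rewrite !inE; apply: (leCP _ _ xy).
have /eqP eq_sets : [set i | x i] == [set i | y i] by rewrite eqEcard sub.
have : i \in [set i | x i] by rewrite eq_sets inE.
by rewrite inE.
Qed.

Lemma upd_at x i a : upd x i a i = a.
Proof. by rewrite ffunE eqxx. Qed.

Lemma upd_ne x i a j : j != i -> upd x i a j = x j.
Proof. by rewrite ffunE => /negbTE ->. Qed.

Lemma upd_upd x i a b : upd (upd x i a) i b = upd x i b.
Proof. by apply/ffunP => j; rewrite !ffunE; case: eqP. Qed.

Lemma upd_id x i : upd x i (x i) = x.
Proof. by apply/ffunP => j; rewrite ffunE; case: eqP => // ->. Qed.

Definition cneg x : config V := [ffun i => ~~ x i].

Lemma cnegK x : cneg (cneg x) = x.
Proof. by apply/ffunP => i; rewrite !ffunE negbK. Qed.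

Lemma cneg_upd x i a : cneg (upd x i a) = upd (cneg x) i (~~ a).
Proof. by apply/ffunP => j; rewrite !ffunE; case: eqP. Qed.

Lemma leC_cneg x y : leC (cneg x) (cneg y) = leC y x.
Proof.
apply/leCP/leCP => H i; last by rewrite !ffunE; apply: contra (H i).
by apply: contraLR; have := H i; rewrite !ffunE.
Qed.

Lemma cneg_bigjoin S : cneg (bigjoin S) = bigmeet (fun y => S (cneg y)).
Proof.
apply/ffunP => i; rewrite !ffunE; apply/existsPn/forallP => H y.
  by have := H (cneg y); rewrite ffunE negb_and negbK implybE.
by have := H (cneg y); rewrite cnegK ffunE implybE negb_and.
Qed.

Lemma cneg_rel_sym (e e' : rel (config V)) :
  (forall a b, e' (cneg a) (cneg b) = e a b) -> forall a b, e (cneg a) (cneg b) = e' a b.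
Proof. by move=> H a b; rewrite -H !cnegK. Qed.

Lemma connect_cneg (e e' : rel (config V)) x y :
  (forall a b, e' (cneg a) (cneg b) = e a b) ->
  connect e' (cneg x) (cneg y) = connect e x y.
Proof.
move=> H; apply/idP/idP; last by apply: connect_homo => a b; rewrite H.
move=> exy; have := connect_homo (f := cneg) (e' := e) _ exy; rewrite !cnegK; apply.
by move=> a b; rewrite (cneg_rel_sym H).
Qed.

Lemma meet_reach_cneg (e e' : rel (config V)) x :
  (forall a b, e' (cneg a) (cneg b) = e a b) ->
  bigmeet (connect (amon e) x) = cneg (bigjoin (connect (mon e') (cneg x))).
Proof.
move=> H; have mon_dual a b : mon e' (cneg a) (cneg b) = amon e a b.
  by rewrite /mon /amon /ltC H leC_cneg (inj_eq (can_inj cnegK)) eq_sym.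
rewrite cneg_bigjoin; apply/ffunP => i; rewrite !ffunE; apply: eq_forallb => y.
by rewrite (connect_cneg _ _ mon_dual).
Qed.

Lemma greatest_cneg (P Q : config V -> Prop) z :
  (forall w, Q w <-> P (cneg w)) -> least P z -> greatest Q (cneg z).
Proof.
move=> QP [Pz z_min]; split; first by apply/QP; rewrite cnegK.
by move=> w /QP /z_min; rewrite -[w in leC w _]cnegK leC_cneg.
Qed.

Lemma least_cneg (P Q : config V -> Prop) z :
  (forall w, Q w <-> P (cneg w)) -> greatest P z -> least Q (cneg z).
Proof.
move=> QP [Pz z_max]; split; first by apply/QP; rewrite cnegK.
by move=> w /QP /z_max; rewrite -[w in leC _ w]cnegK leC_cneg.
Qed.

Section Raising.
(* [P i x]: player i may switch from -1 to +1 at x; P is monotone in x. *)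
Variable P : V -> config V -> bool.
Hypothesis P_mono : forall i x y, leC x y -> P i x -> P i y.

Definition raise : rel (config V) :=
  fun x y => [exists i, [&& ~~ x i, y == upd x i true & P i x]].

Definition saturated x := forall i, P i x -> x i.

Lemma raise_le x y : raise x y -> leC x y.
Proof.
case/existsP => i /and3P [_ /eqP -> _]; apply/leCP => j.
by rewrite ffunE; case: eqP.
Qed.

Lemma raise_reach_ge x y : connect raise x y -> leC x y.
Proof.
apply: (connect_ind (Q := fun y => leC x y)) (leC_refl x).
by move=> a b xa /raise_le; apply: leC_trans.
Qed.

(* The raises available from a smaller start remain available above. *)
Lemma raise_join x y z :
  leC x y -> connect raise x z -> connect raise y (cjoin y z).
Proof.
move=> xy; apply: (connect_ind (Q := fun z => connect raise y (cjoin y z))).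
  move=> a b ya /existsP [i /and3P [ai /eqP -> Pa]].
  have -> : cjoin y (upd a i true) = upd (cjoin y a) i true.
    by apply/ffunP => j; rewrite !ffunE; case: eqP; rewrite ?orbT.
  case yai: (cjoin y a i); first by rewrite -yai upd_id.
  apply: connect_trans ya (connect1 _); apply/existsP; exists i.
  by rewrite yai eqxx (P_mono (leC_cjoinr y a) Pa).
by rewrite cjoin_idPl.
Qed.

Definition raise_top x := bigjoin (connect raise x).

(* [raise_top x] is the greatest configuration reachable from x by raises:
   a reachable configuration with a maximal number of +1's absorbs all others. *)
Lemma raise_top_spec x :
  connect raise x (raise_top x) /\ forall y, connect raise x y -> leC y (raise_top x).
Proof.
have [m xm m_max] := arg_maxnP (fun y => #|[set i | y i]|) (connect0 raise x).
have m_top y : connect raise x y -> leC y m.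
  move=> xy; have xmy := connect_trans xm (raise_join (raise_reach_ge xm) xy).
  by rewrite (leC_card_eq (leC_cjoinl m y) (m_max _ xmy)) leC_cjoinr.
suff -> : raise_top x = m by [].
apply: leC_anti; last exact: bigjoin_ub.
by apply/leCP => i /bigjoinP [y /m_top /leCP]; apply.
Qed.

Lemma raise_top_reach x : connect raise x (raise_top x).
Proof. by case: (raise_top_spec x). Qed.

Lemma raise_top_saturated x : saturated (raise_top x).
Proof.
move=> i Pi; apply: contraT => ni; have [xt t_max] := raise_top_spec x.
have r : raise (raise_top x) (upd (raise_top x) i true).
  by apply/existsP; exists i; rewrite ni eqxx.
have /leCP/(_ i) := t_max _ (connect_trans xt (connect1 r)).
by rewrite upd_at (negbTE ni) => /(_ isT).
Qed.

Lemma path_below_saturated (e : rel (config V)) x z w :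
  (forall a b, e a b -> raise a b || leC b a) ->
  saturated w -> leC x w -> connect e x z -> leC z w.
Proof.
move=> e_raise w_sat xw; apply: (connect_ind (Q := fun z => leC z w)) xw.
move=> a b aw /e_raise /orP [|ba]; last exact: leC_trans ba aw.
case/existsP => i /and3P [_ /eqP -> Pa]; apply/leCP => j; rewrite ffunE.
by case: eqP => [-> _ | _ /(leCP _ _ aw)]; first exact: w_sat (P_mono aw Pa).
Qed.

Lemma raise_top_least x w : saturated w -> leC x w -> leC (raise_top x) w.
Proof.
move=> w_sat xw; apply: path_below_saturated w_sat xw (raise_top_reach x).
by move=> a b ->.
Qed.

End Raising.
End Configurations.

Section Game.
Variables (R : realDomainType) (V : finType) (u : V -> config V -> R).
Implicit Types (x y z w : config V) (s : bool).

Definition marginal i x := u i (upd x i true) - u i (upd x i false).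

Definition improves s (a b : R) := if s then a < b else a <= b.

Definition step s : rel (config V) :=
  fun x y => [exists i, (y == upd x i (~~ x i)) && improves s (u i x) (u i y)].

Lemma IstepE : Istep u = step true. Proof. by []. Qed.
Lemma BRstepE : BRstep u = step false. Proof. by []. Qed.

Definition wants_up s i x := improves s 0 (marginal i x).

Lemma wants_up_ge0 s i x : wants_up s i x -> 0 <= marginal i x.
Proof. by case: s => //; apply: ltW. Qed.

Lemma wants_up_strict_weak i x : wants_up true i x -> wants_up false i x.
Proof. exact: ltW. Qed.

Lemma marginal_upd i x a : marginal i (upd x i a) = marginal i x.
Proof. by rewrite /marginal !upd_upd. Qed.

Lemma best_respE i x :
  best_resp u i x (x i) = if x i then 0 <= marginal i x else marginal i x <= 0.
Proof.
rewrite /best_resp /marginal; case: (x i).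
  by rewrite subr_ge0; apply/forallP/idP => [/(_ false) | H [] //].
by rewrite subr_le0; apply/forallP/idP => [/(_ true) | H []].
Qed.

Lemma raise_improves s i x :
  ~~ x i -> improves s (u i x) (u i (upd x i true)) = wants_up s i x.
Proof.
move=> nxi; rewrite /wants_up /marginal -{1}(upd_id x i) (negbTE nxi).
by case: s; rewrite /improves ?subr_gt0 ?subr_ge0.
Qed.

Lemma step_cases s x y : step s x y -> raise (wants_up s) x y || leC y x.
Proof.
case/existsP => i /andP [/eqP -> imp]; case xi: (x i).
  by apply/orP; right; apply/leCP => j; rewrite ffunE; case: eqP => [->|//]; rewrite xi.
rewrite xi /= in imp; apply/orP; left; apply/existsP; exists i.
by rewrite xi eqxx -raise_improves ?xi.
Qed.

Lemma mon_step s : mon (step s) =2 raise (wants_up s).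
Proof.
move=> x y; apply/andP/idP => [[/step_cases /orP [//|yx] /andP [xy nxy]] | r].
  by rewrite (leC_anti xy yx) eqxx in nxy.
have [i /and3P [nxi /eqP yE wi]] := existsP r; split.
  by apply/existsP; exists i; rewrite yE (negbTE nxi) eqxx raise_improves.
rewrite /ltC (raise_le r) yE /=; apply: contraNneq nxi => e.
by rewrite {1}e upd_at.
Qed.

Lemma raise_step s x y : raise (wants_up s) x y -> step s x y.
Proof. by rewrite -mon_step => /andP []. Qed.

Lemma join_reach_step s x :
  bigjoin (connect (mon (step s)) x) = raise_top (wants_up s) x.
Proof.
apply/ffunP => i; rewrite !ffunE; apply: eq_existsb => y.
by rewrite (eq_connect (mon_step s)).
Qed.

Lemma fplusE x : fplus u x = raise_top (wants_up true) x.
Proof. by rewrite /fplus IstepE join_reach_step. Qed.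

Lemma gplusE x : gplus u x = raise_top (wants_up false) x.
Proof. by rewrite /gplus BRstepE join_reach_step. Qed.

Lemma Istep_BRstep x y : Istep u x y -> BRstep u x y.
Proof. by case/existsP => i /andP [e lt]; apply/existsP; exists i; rewrite e ltW. Qed.

Lemma Ireach_BRreach x y : connect (Istep u) x y -> connect (BRstep u) x y.
Proof. by apply: connect_sub => a b /Istep_BRstep /connect1. Qed.

Definition no_lower x := forall i, marginal i x < 0 -> ~~ x i.

Lemma equilibriumP x :
  equilibrium u x <-> saturated (wants_up true) x /\ no_lower x.
Proof.
split => [/forallP eqx | [sat nl]].
  by split => i; have := eqx i; rewrite best_respE /wants_up /=;
    case: (x i) => // h; rewrite ?ltNge h.
apply/forallP => i; rewrite best_respE !leNgt.
by case xi: (x i); apply/negP; [move/(nl i) | move/(sat i)]; rewrite xi.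
Qed.

Section Supermodular.
Hypothesis hsm : supermodular u.

Lemma marginal_mono i x y : leC x y -> marginal i x <= marginal i y.
Proof. by move=> /leCP xy; apply: hsm => j _; apply/implyP/xy. Qed.

Lemma wants_up_mono s i x y : leC x y -> wants_up s i x -> wants_up s i y.
Proof.
move=> /(marginal_mono i) le; case: s; rewrite /wants_up /improves => h.
  exact: lt_le_trans le.
exact: le_trans le.
Qed.

Lemma raise_no_lower s x y : raise (wants_up s) x y -> no_lower x -> no_lower y.
Proof.
move=> r nl j; have xy := raise_le r; case/existsP: r => i /and3P [_ /eqP yE wi].
case: (eqVneq j i) => [-> | ji].
  by rewrite yE marginal_upd ltNge (wants_up_ge0 wi).
by move/(le_lt_trans (marginal_mono j xy))/nl; rewrite yE upd_ne.
Qed.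

Lemma reach_no_lower s x y :
  connect (raise (wants_up s)) x y -> no_lower x -> no_lower y.
Proof. by move=> xy nl; apply: connect_ind nl xy => a b na /raise_no_lower; apply. Qed.

Let top_reach s x := raise_top_reach (@wants_up_mono s) x.
Let top_saturated s x := raise_top_saturated (@wants_up_mono s) (x := x).

Lemma step_reach_top s x : connect (step s) x (raise_top (wants_up s) x).
Proof.
have sub : subrel (raise (wants_up s)) (connect (step s)).
  by move=> a b r; apply: connect1; apply: raise_step r.
exact: (connect_sub sub) (top_reach s x).
Qed.

Lemma step_reach_le_top s x z :
  connect (step s) x z -> leC z (raise_top (wants_up s) x).
Proof.
apply: (path_below_saturated (@wants_up_mono s) (@step_cases s)).
  exact: top_saturated.
exact: raise_reach_ge (top_reach s x).
Qed.

Lemma fplus_reach x : connect (Istep u) x (fplus u x).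
Proof. by rewrite fplusE IstepE; apply: step_reach_top. Qed.

Lemma gplus_reach x : connect (BRstep u) x (gplus u x).
Proof. by rewrite gplusE BRstepE; apply: step_reach_top. Qed.

Lemma Ireach_le_fplus x z : connect (Istep u) x z -> leC z (fplus u x).
Proof. by rewrite fplusE IstepE; apply: step_reach_le_top. Qed.

Lemma BRreach_le_gplus x z : connect (BRstep u) x z -> leC z (gplus u x).
Proof. by rewrite gplusE BRstepE; apply: step_reach_le_top. Qed.

Lemma fplus_saturated x : saturated (wants_up true) (fplus u x).
Proof. by rewrite fplusE; apply: top_saturated. Qed.

Lemma gplus_saturated x : saturated (wants_up true) (gplus u x).
Proof.
rewrite gplusE => i /wants_up_strict_weak.
exact: top_saturated.
Qed.

Lemma fplus_lub x :
  no_lower x -> least (fun w => equilibrium u w /\ leC x w) (fplus u x).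
Proof.
move=> nl; split.
  split; last by rewrite fplusE; apply: raise_reach_ge (top_reach true x).
  apply/equilibriumP; split; first exact: fplus_saturated.
  by rewrite fplusE; apply: reach_no_lower (top_reach true x) nl.
move=> w [/equilibriumP [w_sat _] xw]; rewrite fplusE.
exact (raise_top_least (@wants_up_mono true) w_sat xw).
Qed.

Lemma gplus_eq x : equilibrium u x -> equilibrium u (gplus u x).
Proof.
move=> /equilibriumP [_ nl]; apply/equilibriumP; split; first exact: gplus_saturated.
by rewrite gplusE; apply: reach_no_lower (top_reach false x) nl.
Qed.

End Supermodular.
End Game.

Section Duality.
Variables (R : realDomainType) (V : finType) (u v : V -> config V -> R).
Hypothesis uv : forall i x, v i x = u i (cneg x).
Implicit Types (x y z w : config V) (s : bool).

(* Negation changes the sign of marginal payoffs, so it preserves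
   super-modularity, steps and equilibria. *)
Lemma marginal_dual i x : marginal v i (cneg x) = - marginal u i x.
Proof. by rewrite /marginal !uv !cneg_upd cnegK /= opprB. Qed.

Lemma supermodular_dual : supermodular u -> supermodular v.
Proof.
move=> hsm i x y yx; rewrite -/(marginal v i y) -/(marginal v i x).
rewrite -[x]cnegK -[y]cnegK !marginal_dual lerN2; apply: hsm => j ji.
by rewrite !ffunE; have := yx j ji; case: (x j) (y j).
Qed.

Lemma step_dual s a b : step v s (cneg a) (cneg b) = step u s a b.
Proof.
apply: eq_existsb => i; rewrite !uv !cnegK.
have -> : upd (cneg a) i (~~ cneg a i) = cneg (upd a i (~~ a i)).
  by rewrite cneg_upd ffunE.
by rewrite (inj_eq (can_inj (@cnegK V))).
Qed.

Lemma equilibrium_dual x : equilibrium v (cneg x) = equilibrium u x.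
Proof.
apply: eq_forallb => i; rewrite !best_respE marginal_dual ffunE oppr_ge0 oppr_le0.
by case: (x i).
Qed.

Lemma fminus_dual x : fminus u x = cneg (fplus v (cneg x)).
Proof. exact: meet_reach_cneg (step_dual true). Qed.

Lemma gminus_dual x : gminus u x = cneg (gplus v (cneg x)).
Proof. exact: meet_reach_cneg (step_dual false). Qed.

Lemma fplus_dual x : fplus u x = cneg (fminus v (cneg x)).
Proof.
have -> : fminus v (cneg x) = cneg (fplus u x).
  by rewrite /fminus IstepE (meet_reach_cneg _ (cneg_rel_sym (step_dual true))) cnegK.
by rewrite cnegK.
Qed.

Lemma reach_eq_dual s x w :
  equilibrium u w /\ connect (step u s) x w <->
  equilibrium v (cneg w) /\ connect (step v s) (cneg x) (cneg w).
Proof. by rewrite equilibrium_dual (connect_cneg _ _ (step_dual s)). Qed.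

End Duality.

Definition dual_game (R : realDomainType) (V : finType) (u : V -> config V -> R) :
  V -> config V -> R := fun i x => u i (cneg x).

Lemma dual_gameE (R : realDomainType) (V : finType) (u : V -> config V -> R) i x :
  dual_game u i x = u i (cneg x).
Proof. by []. Qed.

Section Downward.
Variables (R : realDomainType) (V : finType) (u : V -> config V -> R).
Hypothesis hsm : supermodular u.
Implicit Types (x y z w : config V).

Let uv := dual_gameE u.
Let hv : supermodular (dual_game u) := supermodular_dual uv hsm.

Lemma fminus_glb x :
  saturated (wants_up u true) x ->
  greatest (fun w => equilibrium u w /\ leC w x) (fminus u x).
Proof.
move=> sat; rewrite (fminus_dual uv); apply: greatest_cneg (fplus_lub hv _).
  by move=> w; rewrite (equilibrium_dual uv) leC_cneg.
by move=> i; rewrite (marginal_dual uv) ffunE oppr_lt0 negbK => /sat.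
Qed.

Lemma fminus_reach x : connect (Istep u) x (fminus u x).
Proof.
rewrite (fminus_dual uv) IstepE -(connect_cneg _ _ (step_dual uv true)) cnegK.
exact: fplus_reach hv _.
Qed.

Lemma Ireach_ge_fminus x z : connect (Istep u) x z -> leC (fminus u x) z.
Proof.
rewrite (fminus_dual uv) IstepE -(connect_cneg _ _ (step_dual uv true)).
by move/(Ireach_le_fplus hv); rewrite -[z in leC _ z]cnegK leC_cneg.
Qed.

Lemma BRreach_ge_gminus x z : connect (BRstep u) x z -> leC (gminus u x) z.
Proof.
rewrite (gminus_dual uv) BRstepE -(connect_cneg _ _ (step_dual uv false)).
by move/(BRreach_le_gplus hv); rewrite -[z in leC _ z]cnegK leC_cneg.
Qed.

Lemma gminus_eq x : equilibrium u x -> equilibrium u (gminus u x).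
Proof.
rewrite (gminus_dual uv) -!(equilibrium_dual uv) cnegK.
exact (gplus_eq hv (x := cneg x)).
Qed.

End Downward.

Section ReachableEquilibria.
Variables (R : realDomainType) (V : finType) (u : V -> config V -> R).
Hypothesis hsm : supermodular u.
Implicit Types (x y z w : config V).

(* (i): climb with f^+ to a saturated point, then descend with f^-. *)
Lemma Ireachable_greatest x :
  greatest (fun w => equilibrium u w /\ connect (Istep u) x w) (fminus u (fplus u x)).
Proof.
have [[eq_t _] t_max] := fminus_glb hsm (fplus_saturated hsm (x := x)).
split; first by split; last exact: connect_trans (fplus_reach hsm x) (fminus_reach hsm _).
by move=> w [ew xw]; apply: t_max; split; last exact: Ireach_le_fplus.
Qed.

(* (ii): the same with g^+ for the climb. *)
Lemma BRreachable_greatest x :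
  greatest (fun w => equilibrium u w /\ connect (BRstep u) x w) (fminus u (gplus u x)).
Proof.
have [[eq_t _] t_max] := fminus_glb hsm (gplus_saturated hsm (x := x)).
split; first split => //.
  exact: connect_trans (gplus_reach hsm x) (Ireach_BRreach (fminus_reach hsm _)).
by move=> w [ew xw]; apply: t_max; split; last exact: BRreach_le_gplus.
Qed.

Lemma BRreachable_greatest_from_eq x :
  equilibrium u x ->
  greatest (fun w => equilibrium u w /\ connect (BRstep u) x w) (gplus u x).
Proof.
move=> ex; split; first by split; [apply: gplus_eq | apply: gplus_reach].
by move=> w [_ xw]; apply: BRreach_le_gplus.
Qed.

End ReachableEquilibria.

Section LeastByDuality.
(* The "least" halves of (i)-(iii) are the "greatest" halves of the dual game. *)
Variables (R : realDomainType) (V : finType) (u : V -> config V -> R).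
Hypothesis hsm : supermodular u.
Implicit Types (x w : config V).

Let uv := dual_gameE u.
Let hv : supermodular (dual_game u) := supermodular_dual uv hsm.

Lemma Ireachable_least x :
  least (fun w => equilibrium u w /\ connect (Istep u) x w) (fplus u (fminus u x)).
Proof.
rewrite (fplus_dual uv) (fminus_dual uv) cnegK.
apply: least_cneg (Ireachable_greatest hv (cneg x)) => w.
exact: reach_eq_dual uv true x w.
Qed.

Lemma BRreachable_least x :
  least (fun w => equilibrium u w /\ connect (BRstep u) x w) (fplus u (gminus u x)).
Proof.
rewrite (fplus_dual uv) (gminus_dual uv) cnegK.
apply: least_cneg (BRreachable_greatest hv (cneg x)) => w.
exact: reach_eq_dual uv false x w.
Qed.

Lemma BRreachable_least_from_eq x :
  equilibrium u x ->
  least (fun w => equilibrium u w /\ connect (BRstep u) x w) (gminus u x).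
Proof.
rewrite -(equilibrium_dual uv) (gminus_dual uv) => ex.
apply: least_cneg (BRreachable_greatest_from_eq hv ex) => w.
exact: reach_eq_dual uv false x w.
Qed.

End LeastByDuality.

Section LatticeOfEquilibria.
Variables (R : realDomainType) (V : finType) (u : V -> config V -> R).
Hypothesis hsm : supermodular u.
Implicit Types (x y z w : config V) (S : pred (config V)).

Lemma equilibria_lub S J :
  (forall y, S y -> equilibrium u y /\ leC y J) ->
  (forall i, J i -> exists2 y, S y & y i) ->
  least (fun w => equilibrium u w /\ forall y, S y -> leC y w) (fplus u J).
Proof.
move=> SJ J_sup; have nl : no_lower u J.
  move=> i mi; apply/negP => /J_sup [y Sy yi]; have [ey yJ] := SJ y Sy.
  have [_ nly] := (equilibriumP u y).1 ey.
  by have := nly i (le_lt_trans (marginal_mono hsm i yJ) mi); rewrite yi.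
have [[eF JF] F_min] := fplus_lub hsm nl.
split; first by split => // y /SJ [_ yJ]; apply: leC_trans yJ JF.
move=> w [ew Sw]; apply: F_min; split => //.
by apply/leCP => i /J_sup [y /Sw /leCP]; apply.
Qed.

Lemma equilibria_glb S M :
  (forall y, S y -> equilibrium u y /\ leC M y) ->
  (forall i, (forall y, S y -> y i) -> M i) ->
  greatest (fun w => equilibrium u w /\ forall y, S y -> leC w y) (fminus u M).
Proof.
move=> SM M_inf; have sat : saturated (wants_up u true) M.
  move=> i wi; apply: M_inf => y Sy; have [ey My] := SM y Sy.
  exact: ((equilibriumP u y).1 ey).1 i (wants_up_mono hsm My wi).
have [[eG GM] G_max] := fminus_glb hsm sat.
split; first by split => // y /SM [_ My]; apply: leC_trans GM My.
move=> w [ew Sw]; apply: G_max; split => //.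
by apply/leCP => i wi; apply: M_inf => y /Sw /leCP; apply.
Qed.

Lemma equilibria_complete (S : {set config V}) :
  {subset S <= equilibrium u} ->
  (exists s, least (fun w => equilibrium u w /\ forall y, y \in S -> leC y w) s) /\
  (exists s, greatest (fun w => equilibrium u w /\ forall y, y \in S -> leC w y) s).
Proof.
move=> SE; split.
  exists (fplus u (bigjoin (mem S))); apply: equilibria_lub; last exact: bigjoinP.
  by move=> y yS; split; [apply: SE | apply: bigjoin_ub].
exists (fminus u (bigmeet (mem S))); apply: equilibria_glb; last exact: bigmeetP.
by move=> y yS; split; [apply: SE | apply: bigmeet_lb].
Qed.

Lemma least_equilibrium : least (equilibrium u) (fplus u (cm1 V)).
Proof.
have nl : no_lower u (cm1 V) by move=> i _; rewrite ffunE.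
have [[e _] F_min] := fplus_lub hsm nl.
by split=> // w ew; apply: F_min; split; last apply: cm1_le.
Qed.

Lemma greatest_equilibrium : greatest (equilibrium u) (fminus u (cp1 V)).
Proof.
have sat : saturated (wants_up u true) (cp1 V) by move=> i _; rewrite ffunE.
have [[e _] G_max] := fminus_glb hsm sat.
by split=> // w ew; apply: G_max; split; last apply: le_cp1.
Qed.

Lemma gminus_cm1 : gminus u (cm1 V) = cm1 V.
Proof. exact: leC_anti (bigmeet_lb (connect0 _ _)) (cm1_le _). Qed.

Lemma gplus_cp1 : gplus u (cp1 V) = cp1 V.
Proof. exact: leC_anti (le_cp1 _) (bigjoin_ub (connect0 _ _)). Qed.

Lemma equilibria_join x y :
  equilibrium u x -> equilibrium u y ->
  least (fun w => equilibrium u w /\ leC x w /\ leC y w) (fplus u (cjoin x y)).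
Proof.
move=> ex ey; pose S := [pred z | (z == x) || (z == y)].
have SJ z : S z -> equilibrium u z /\ leC z (cjoin x y).
  by case/orP => /eqP ->; split; rewrite ?leC_cjoinl ?leC_cjoinr.
have J_sup i : cjoin x y i -> exists2 z, S z & z i.
  by rewrite ffunE => /orP [xi|yi]; [exists x | exists y]; rewrite //= eqxx ?orbT.
have [[eJ ub] J_min] := equilibria_lub SJ J_sup.
split; first by split => //; split; apply: ub; rewrite /= eqxx ?orbT.
by move=> w [ew [xw yw]]; apply: J_min; split => // z /orP [] /eqP ->.
Qed.

Lemma equilibria_meet x y :
  equilibrium u x -> equilibrium u y ->
  greatest (fun w => equilibrium u w /\ leC w x /\ leC w y) (fminus u (cmeet x y)).
Proof.
move=> ex ey; pose S := [pred z | (z == x) || (z == y)].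
have SM z : S z -> equilibrium u z /\ leC (cmeet x y) z.
  by case/orP => /eqP ->; split; rewrite ?leC_cmeetl ?leC_cmeetr.
have M_inf i : (forall z, S z -> z i) -> cmeet x y i.
  by move=> H; rewrite ffunE !H //= eqxx ?orbT.
have [[eM lb] M_max] := equilibria_glb SM M_inf.
split; first by split => //; split; apply: lb; rewrite /= eqxx ?orbT.
by move=> w [ew [xw yw]]; apply: M_max; split => // z /orP [] /eqP ->.
Qed.

(* No improvement path leaves an equilibrium y, since I-paths from y stay
   between f^-(y) and f^+(y), which are y itself. *)
Lemma equilibrium_Istep_fixed y z :
  equilibrium u y -> connect (Istep u) y z -> z = y.
Proof.
move=> ey yz; have [sat nl] := (equilibriumP u y).1 ey.
have [_ F_min] := fplus_lub hsm nl; have [_ G_max] := fminus_glb hsm sat.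
apply: leC_anti.
  by apply: leC_trans (Ireach_le_fplus hsm yz) (F_min y (conj ey (leC_refl y))).
by apply: leC_trans (G_max y (conj ey (leC_refl y))) (Ireach_ge_fminus hsm yz).
Qed.

Lemma equilibria_glob_Istable : glob_stable (Istep u) (equilibrium u).
Proof.
split; last by move=> y z ey /(equilibrium_Istep_fixed ey) ->.
by move=> x; have [[ew xw] _] := Ireachable_greatest hsm x; exists (fminus u (fplus u x)).
Qed.

(* (vii): a unique equilibrium xs is globally BR-stable, since BR-paths from
   xs stay between g^-(xs) and g^+(xs), which are equilibria, hence xs. *)
Lemma unique_equilibrium_BRstable xs :
  fplus u (cm1 V) = xs -> fminus u (cp1 V) = xs ->
  (forall z, equilibrium u z <-> z = xs) /\ glob_stable (BRstep u) (equilibrium u).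
Proof.
move=> lo hi; have [exs xs_min] := least_equilibrium.
have [_ xs_max] := greatest_equilibrium.
rewrite lo in exs xs_min; rewrite hi in xs_max.
have eq_xs z : equilibrium u z <-> z = xs.
  by split=> [ez | ->] //; apply: leC_anti; [apply: xs_max | apply: xs_min].
split=> //; split.
  move=> x; have [[ew xw] _] := Ireachable_greatest hsm x.
  by exists (fminus u (fplus u x)); last exact: Ireach_BRreach.
move=> y z /eq_xs -> xz; apply/eq_xs; apply: leC_anti.
  by have /eq_xs <- := gplus_eq hsm exs; apply: BRreach_le_gplus.
by have /eq_xs <- := gminus_eq hsm exs; apply: BRreach_ge_gminus.
Qed.

End LatticeOfEquilibria.

Theorem proposition2 (R : realDomainType) (V : finType)
    (u : V -> config V -> R) (hsm : supermodular u) :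
  (forall x : config V,
     (* (i) *)
     greatest (fun w => equilibrium u w /\ connect (Istep u) x w)
              (fminus u (fplus u x)) /\
     least (fun w => equilibrium u w /\ connect (Istep u) x w)
           (fplus u (fminus u x)) /\
     (* (ii) *)
     greatest (fun w => equilibrium u w /\ connect (BRstep u) x w)
              (fminus u (gplus u x)) /\
     least (fun w => equilibrium u w /\ connect (BRstep u) x w)
           (fplus u (gminus u x)) /\
     (* (iii) *)
     (equilibrium u x ->
        greatest (fun w => equilibrium u w /\ connect (BRstep u) x w) (gplus u x) /\
        least (fun w => equilibrium u w /\ connect (BRstep u) x w) (gminus u x))) /\
  (* (iv) nonempty complete lattice, globally I-stable *)
  ((exists x, equilibrium u x) /\
   (forall S : {set config V}, {subset S <= equilibrium u} ->
      (exists s, least (fun w => equilibrium u w /\ forall y, y \in S -> leC y w) s) /\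
      (exists s, greatest (fun w => equilibrium u w /\ forall y, y \in S -> leC w y) s)) /\
   glob_stable (Istep u) (equilibrium u)) /\
  (* (v) *)
  (fplus u (gminus u (cm1 V)) = fplus u (cm1 V) /\
   least (fun w => equilibrium u w) (fplus u (cm1 V)) /\
   fminus u (gplus u (cp1 V)) = fminus u (cp1 V) /\
   greatest (fun w => equilibrium u w) (fminus u (cp1 V))) /\
  (* (vi) *)
  (forall x y, equilibrium u x -> equilibrium u y ->
     least (fun w => equilibrium u w /\ leC x w /\ leC y w) (fplus u (cjoin x y)) /\
     greatest (fun w => equilibrium u w /\ leC w x /\ leC w y) (fminus u (cmeet x y))) /\
  (* (vii) *)
  (forall xs, fplus u (cm1 V) = xs -> fminus u (cp1 V) = xs ->
     (forall z, equilibrium u z <-> z = xs) /\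
     glob_stable (BRstep u) (equilibrium u)).
Proof.
split.
  move=> x; split; first exact: Ireachable_greatest.
  split; first exact: Ireachable_least.
  split; first exact: BRreachable_greatest.
  split; first exact: BRreachable_least.
  by move=> ex; split; [apply: BRreachable_greatest_from_eq | apply: BRreachable_least_from_eq].
split.
  split; first by exists (fplus u (cm1 V)); case: (least_equilibrium hsm).
  by split; [apply: equilibria_complete | apply: equilibria_glob_Istable].
split.
  rewrite gminus_cm1 gplus_cp1; split=> //; split; first exact: least_equilibrium.
  by split=> //; apply: greatest_equilibrium.
split; last exact: unique_equilibrium_BRstable.
by move=> x y ex ey; split; [apply: equilibria_join | apply: equilibria_meet].
Qed.
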